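(* In the setting below, for every symmetry $g$ of $X$ there is $\tilde g\in\mathrm{Aut}(N)$ with $\tilde g(\iota(p))=\iota(g_*p)$ for all $p\in P$; every such $\tilde g$ permutes the twelve sublattices $A_{2,j}=\mathrm{span}_{\mathbb Z}\{\tilde E_j^{(1)},\tilde E_j^{(2)}\}$, and the induced permutation $\Theta(g)\in S_{12}$ depends only on $g$. The map $\Theta$ is an injective group homomorphism from the symmetry group of $X$ into the Mathieu group $M_{12}$ (the group of permutations of the twelve $A_{2,j}$ induced by $\mathrm{Aut}(N)$), and its image is generated by $\Theta(\alpha^1)=(1,4,3)(2,9,7)(5,8,6)$, $\Theta(\alpha^2)=(1,9,8)(2,5,3)(4,7,6)$, $\Theta(\beta)=(1,9,2,3)(4,8,7,5)$.
   Context: $\xi=e^{2\pi i/3}$, $c=(\xi+2)/3$, $T=\mathbb C^2/L$ with $L$ generated by $(1,0),(\xi,0),(0,1),(0,\xi)$, $\mathbb Z_3$ acting via $(z_1,z_2)\mapsto(\xi z_1,\xi^{-1}z_2)$, $X$ the minimal resolution of $T/\mathbb Z_3$. A symmetry of $X$ is a biholomorphic automorphism preserving the holomorphic volume form induced by $dz_1\wedge dz_2$ and the Kähler class induced by the Euclidean metric on $T$; the symmetry group is generated by the automorphisms $\alpha^1,\alpha^2,\beta$ induced by $(z_1,z_2)\mapsto(z_1+c,z_2)$, $(z_1,z_2)\mapsto(z_1,z_2+c)$, $(z_1,z_2)\mapsto(-z_2,z_1)$; $g_*$ is the induced action on $H^2(X,\mathbb Z)$. $E_t^{(1)},E_t^{(2)}$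 ($t\in\mathbb F_3^2$) are the Poincaré duals of the two exceptional $(-2)$-curves over the fixed point $[(t_1c,t_2c)]$, labelled compatibly with translations; $P=(R\otimes\mathbb Q)\cap H^2(X,\mathbb Z)$ with $R$ their span. $N$ is the $\mathbb Z$-span of vectors $\tilde E_j^{(\ell)}$ ($j\le12$, $\ell=1,2$; Gram $2$ on the diagonal, $-1$ between $\tilde E_j^{(1)},\tilde E_j^{(2)}$, $0$ otherwise) and $w_i=\tfrac13\sum_j a_{ij}(\tilde E_j^{(1)}+2\tilde E_j^{(2)})$, rows $(a_{ij})_j$: $(0,1,1,1,1,1,1,0,0,0,0,0)$, $(-1,0,1,-1,-1,1,0,1,0,0,0,0)$, $(-1,1,0,1,-1,-1,0,0,1,0,0,0)$, $(-1,-1,1,0,1,-1,0,0,0,1,0,0)$, $(-1,-1,-1,1,0,1,0,0,0,0,1,0)$, $(-1,1,-1,-1,1,0,0,0,0,0,0,1)$ (the Niemeier lattice of type $A_2^{12}$). $\iota\colon P(-1)\hookrightarrow N$ is the $\mathbb Q$-linear map $E^{(\ell)}_{(0,0)}\mapsto\tilde E_6^{(\ell)}$, $E^{(\ell)}_{(0,1)}\mapsto\tilde E_4^{(\ell)}$, $E^{(\ell)}_{(0,2)}\mapsto\tilde E_7^{(\ell)}$, $E^{(\ell)}_{(1,0)}\mapsto-\tilde E_5^{(\ell)}$, $E^{(\ell)}_{(1,1)}\mapsto-\tilde E_3^{(\ell)}$, $E^{(\ell)}_{(1,2)}\mapsto-\tilde E_2^{(\ell)}$, $E^{(\ell)}_{(2,0)}\mapsto\tilde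 E_8^{(\ell)}$, $E^{(\ell)}_{(2,1)}\mapsto\tilde E_1^{(\ell)}$, $E^{(\ell)}_{(2,2)}\mapsto\tilde E_9^{(\ell)}$. The Mathieu group $M_{12}$ is realized as the quotient of $\mathrm{Aut}(N)$ by the normal subgroup generated by the Weyl group $(S_3)^{12}$ and $-\mathrm{id}$, acting by permutations of $\{1,\dots,12\}$ (indices of the $A_{2,j}$). *)

From mathcomp Require Import all_boot all_order all_fingroup all_algebra.
Set Implicit Arguments. Unset Strict Implicit. Unset Printing Implicit Defensive.
Import GRing.Theory Num.Theory.
Local Open Scope ring_scope.

Definition apply_cycle (c : seq nat) (x : nat) : nat :=
  if x \in c then nth 0%N c ((index x c).+1 %% size c) else x.
Definition cyc (cs : seq (seq nat)) (x : nat) : nat := foldr apply_cycle x cs.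

(* coordinate vectors: index (j, l) with j : 'I_12 (j = paper's j - 1),
   l : 'I_2 (l = paper's ell - 1) *)
Definition Vec := 'rV[rat]_(12 * 2).
Definition Et (j : 'I_12) (l : 'I_2) : Vec := delta_mx 0 (mxvec_index j l).
Definition Et1 (j : nat) (l : 'I_2) : Vec := Et (inord j.-1) l.

Definition GramN : 'M[rat]_(12 * 2) :=
  \sum_(j < 12) \sum_(l < 2) \sum_(l' < 2)
     (if l == l' then 2%:R else -1) *: delta_mx (mxvec_index j l) (mxvec_index j l').

Definition bN (u v : Vec) : rat := (u *m GramN *m v^T) 0 0.

Definition glue_rows : seq (seq int) :=
  [:: [:: 0; 1; 1; 1; 1; 1; 1; 0; 0; 0; 0; 0];
      [:: -1; 0; 1; -1; -1; 1; 0; 1; 0; 0; 0; 0];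
      [:: -1; 1; 0; 1; -1; -1; 0; 0; 1; 0; 0; 0];
      [:: -1; -1; 1; 0; 1; -1; 0; 0; 0; 1; 0; 0];
      [:: -1; -1; -1; 1; 0; 1; 0; 0; 0; 0; 1; 0];
      [:: -1; 1; -1; -1; 1; 0; 0; 0; 0; 0; 0; 1]]%R.

Definition wvec (row : seq int) : Vec :=
  3%:R^-1 *: \sum_(j < 12) (nth 0 row j)%:~R *: (Et j 0 + 2%:R *: Et j 1).

Definition genN : seq Vec :=
  [seq Et jl.1 jl.2 | jl : 'I_12 * 'I_2] ++ map wvec glue_rows.

Definition inN (v : Vec) : Prop := inIntSpan (in_tuple genN) v.

(* Aut(N): rational linear maps (acting on row vectors, v |-> v *m M)
   preserving the bilinear form and mapping N bijectively onto N *)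
Definition AutN (M : 'M[rat]_(12 * 2)) : Prop :=
  (forall u v : Vec, bN (u *m M) (v *m M) = bN u v) /\
  (forall v, inN v -> inN (v *m M)) /\
  (forall v, inN v -> exists u, inN u /\ u *m M = v).

Definition inA2 (j : 'I_12) (v : Vec) : Prop :=
  inIntSpan (in_tuple [:: Et j 0; Et j 1]) v.

Definition inducesPerm (M : 'M[rat]_(12 * 2)) (s : {perm 'I_12}) : Prop :=
  forall j v, inA2 (s j) v <-> exists u, inA2 j u /\ v = u *m M.

Definition inM12 (s : {perm 'I_12}) : Prop :=
  exists M, AutN M /\ inducesPerm M s.

(* ---------- Exceptional curves E_t^(l), t in F_3^2 ---------- *)
Definition Curve := ('I_3 * 'I_3 * 'I_2)%type.

Definition iota_tab : seq (seq nat) := [:: [:: 6; 4; 7]; [:: 5; 3; 2]; [:: 8; 1; 9]].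
Definition iotaE (x : Curve) : Vec :=
  let: (t1, t2, l) := x in
  (if val t1 == 1%N then -1 else 1) *: Et1 (nth 0%N (nth [::] iota_tab t1) t2) l.

(* ---------- Symmetries, via their permutation of exceptional curves ---------- *)
(* alpha^1: translation by (c,0): t |-> t + (1,0), labels preserved *)
Definition a1f (x : Curve) : Curve := let: (t1, t2, l) := x in (t1 + 1, t2, l).
(* alpha^2: translation by (0,c) *)
Definition a2f (x : Curve) : Curve := let: (t1, t2, l) := x in (t1, t2 + 1, l).
(* beta: (z1,z2) |-> (-z2,z1): t |-> (-t2, t1); since beta conjugates the
   Z_3-generator to its inverse, it swaps the two curves over a fixed point *)
Definition bf (x : Curve) : Curve := let: (t1, t2, l) := x in (- t2, t1, rev_ord l).

Lemma a1f_inj : injective a1f.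
Proof.
apply: (can_inj (g := fun x : Curve => let: (t1, t2, l) := x in (t1 - 1, t2, l))).
by move=> [[t1 t2] l] /=; rewrite addrK.
Qed.
Lemma a2f_inj : injective a2f.
Proof.
apply: (can_inj (g := fun x : Curve => let: (t1, t2, l) := x in (t1, t2 - 1, l))).
by move=> [[t1 t2] l] /=; rewrite addrK.
Qed.
Lemma bf_inj : injective bf.
Proof.
apply: (can_inj (g := fun x : Curve => let: (t1, t2, l) := x in (t2, - t1, rev_ord l))).
by move=> [[t1 t2] l] /=; rewrite opprK rev_ordK.
Qed.

Definition alpha1 : {perm Curve} := perm a1f_inj.
Definition alpha2 : {perm Curve} := perm a2f_inj.
Definition beta : {perm Curve} := perm bf_inj.

Definition SymX : {group {perm Curve}} := <<[set alpha1; alpha2; beta]>>%G.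

(* g~ in Aut(N) is compatible with g: g~(iota p) = iota (g_* p) for p in P;
   by Q-linearity this is equivalent to the condition on the basis E_t^(l)
   of R, and g_* E_x = E_{g x}. *)
Definition extends (M : 'M[rat]_(12 * 2)) (g : {perm Curve}) : Prop :=
  forall x : Curve, iotaE x *m M = iotaE (g x).

From mathcomp Require Import all_boot all_order all_fingroup all_algebra.
From mathcomp Require Import ring lra zify.
Import GRing.Theory Num.Theory.
Set Implicit Arguments. Unset Strict Implicit. Unset Printing Implicit Defensive.
Local Open Scope ring_scope.

(* Every symmetry of X acts on the nine fixed points [t] in F_3^2 by an affine
   map [t |-> R^k t + t0], where [R] is the rotation induced by [beta], and it
   swaps the two curves over each point exactly when [k] is odd.  Through iota
   the fixed points label the first nine [A_2]'s of N, so [g] permutes them;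
   fixing the last three gives [Theta g].  This is a homomorphism, injective
   because an affine map fixing every point is the identity.

   Explicit signed monomial matrices lift the three generators to Aut(N), hence
   every symmetry lifts to an isometry inducing [Theta g].  Any two lifts differ
   by an isometry [K] of N fixing iota(P) pointwise.  Such a [K] fixes the first
   nine [A_2]'s, so it maps a root [E_j^(l)] of one of the last three to a norm 2
   vector of N orthogonal to them; these have integral coordinates, hence lie in
   a single [A_2].  The glue vector [w_(j-5)], whose only spare component lies
   in block [j], shows that this [A_2] is the [j]-th one, and [K] is onto it
   since its determinant there is [±1].  So every lift induces [Theta g]. *)

Local Notation V := (matrix rat 1 (12 * 2)).
Local Notation Mx := (matrix rat (12 * 2) (12 * 2)).

Definition ord_mod n k : 'I_n.+1 := Ordinal (ltn_pmod k (ltn0Sn n)).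

Lemma ord_modK n (i : 'I_n.+1) : ord_mod n i = i.
Proof. by apply: val_inj; rewrite /= modn_small. Qed.

(* Quantification and summation over ordinals written so that [vm_compute]
   can evaluate them (the generic [forall] and [\sum] are opaque to it). *)
Definition all_ord n (P : 'I_n.+1 -> bool) := all (fun k => P (ord_mod n k)) (iota 0 n.+1).

Lemma all_ordP n (P : 'I_n.+1 -> bool) : all_ord P -> forall i, P i.
Proof.
by move=> /allP P_all i; rewrite -[i]ord_modK; apply: P_all; rewrite mem_iota add0n ltn_ord.
Qed.

Definition sum_ord (M : nmodType) n (F : 'I_n.+1 -> M) :=
  foldr (fun k acc => F (ord_mod n k) + acc) 0 (iota 0 n.+1).

Lemma sum_ordE (M : nmodType) n (F : 'I_n.+1 -> M) : \sum_i F i = sum_ord F.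
Proof.
rewrite (eq_bigr (fun i : 'I_n.+1 => F (ord_mod n i))) => [|i _]; last by rewrite ord_modK.
by rewrite -(big_mkord xpredT (fun k => F (ord_mod n k))) unlock.
Qed.

Lemma ord2_cases (l : 'I_2) : l = 0 \/ l = 1.
Proof. by case: l => -[|[|//]] ?; [left|right]; apply: val_inj. Qed.

Lemma sum_ord2 (M : nmodType) (F : 'I_2 -> M) : \sum_l F l = F 0 + F 1.
Proof. by rewrite !big_ord_recr big_ord0 /= add0r; congr (F _ + F _); apply: val_inj. Qed.

Lemma sum_delta (R : pzSemiRingType) (I : finType) (F : I -> R) i0 :
  \sum_i F i * (i0 == i)%:R = F i0.
Proof.
rewrite (bigD1 i0) //= eqxx mulr1 big1 ?addr0 // => i /negbTE ne_i.
by rewrite eq_sym ne_i mulr0.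
Qed.

Lemma natr_andb (R : pzSemiRingType) (a b : bool) : ((a && b)%:R : R) = a%:R * b%:R.
Proof. by case: a; rewrite ?mul1r ?mul0r. Qed.

(** * Coordinates and the bilinear form on Q^24 *)

Definition vcoord (v : V) (j : 'I_12) (l : 'I_2) : rat := v 0 (mxvec_index j l).

Lemma mxvec_index_eq (j j' : 'I_12) (l l' : 'I_2) :
  (mxvec_index j l == mxvec_index j' l') = (j == j') && (l == l').
Proof. by apply/eqP/andP => [/cast_ord_inj/enum_rank_inj [-> ->] | [/eqP-> /eqP->]]. Qed.

Lemma vcoordP (u v : V) : (forall j l, vcoord u j l = vcoord v j l) -> u = v.
Proof. by move=> eq_uv; apply/rowP => k; case/mxvec_indexP: k. Qed.

Lemma vcoordD (u v : V) j l : vcoord (u + v) j l = vcoord u j l + vcoord v j l.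
Proof. by rewrite /vcoord mxE. Qed.
Lemma vcoordN (u : V) j l : vcoord (- u) j l = - vcoord u j l.
Proof. by rewrite /vcoord mxE. Qed.
Lemma vcoordB (u v : V) j l : vcoord (u - v) j l = vcoord u j l - vcoord v j l.
Proof. by rewrite vcoordD vcoordN. Qed.
Lemma vcoordZ a (u : V) j l : vcoord (a *: u) j l = a * vcoord u j l.
Proof. by rewrite /vcoord mxE. Qed.
Lemma vcoordMz (u : V) z j l : vcoord (u *~ z) j l = vcoord u j l * z%:~R.
Proof. by rewrite -scaler_int vcoordZ mulrC. Qed.
Lemma vcoord0 j l : vcoord 0 j l = 0.
Proof. by rewrite /vcoord mxE. Qed.
Lemma vcoord_sum I (r : seq I) (P : pred I) (F : I -> V) j l :
  vcoord (\sum_(i <- r | P i) F i) j l = \sum_(i <- r | P i) vcoord (F i) j l.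
Proof. by rewrite /vcoord summxE. Qed.
Lemma vcoordEt j l j' l' : vcoord (Et j l) j' l' = ((j' == j) && (l' == l))%:R.
Proof. by rewrite /vcoord mxE eqxx mxvec_index_eq. Qed.

Lemma sum_vcoordEt (F : 'I_12 -> 'I_2 -> rat) j' l' :
  \sum_j \sum_l F j l * vcoord (Et j l) j' l' = F j' l'.
Proof.
under eq_bigr => j _ do under eq_bigr => l _ do rewrite vcoordEt natr_andb mulrA.
under eq_bigr => j _ do rewrite sum_delta.
by rewrite (eq_bigr (fun j => F j l' * (j' == j)%:R)) ?sum_delta // => j _; rewrite mulrC.
Qed.

Lemma vec_expand (v : V) : v = \sum_j \sum_l vcoord v j l *: Et j l.
Proof.
apply: vcoordP => j' l'; rewrite vcoord_sum -[LHS]sum_vcoordEt.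
by apply: eq_bigr => j _; rewrite vcoord_sum; apply: eq_bigr => l _; rewrite vcoordZ.
Qed.

Lemma vcoord_supported (v : V) j : (forall k l, k != j -> vcoord v k l = 0) ->
  v = vcoord v j 0 *: Et j 0 + vcoord v j 1 *: Et j 1.
Proof.
move=> supp_v; apply: vcoordP => k l; rewrite vcoordD !vcoordZ !vcoordEt.
have [->|/supp_v->] := eqVneq k j; last by rewrite !mulr0 addr0.
by case: (ord2_cases l) => ->; rewrite /= ?mulr0 ?mulr1 ?addr0 ?add0r.
Qed.

Definition cartan (l l' : 'I_2) : rat := if l == l' then 2%:R else -1.

Lemma cartan_form (x y : 'I_2 -> rat) : \sum_l \sum_l' x l * cartan l l' * y l' =
  2%:R * x 0 * y 0 - x 0 * y 1 - x 1 * y 0 + 2%:R * x 1 * y 1.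
Proof. by rewrite !sum_ord2 /cartan /=; ring. Qed.

Lemma sum_mxvec (F : 'I_(12 * 2) -> rat) : \sum_k F k = \sum_j \sum_l F (mxvec_index j l).
Proof. by rewrite (reindex _ (curry_mxvec_bij 12 2)) /= pair_big; apply: eq_bigr => -[]. Qed.

Lemma GramN_mxvec j l j' l' :
  GramN (mxvec_index j l) (mxvec_index j' l') = (j == j')%:R * cartan l l'.
Proof.
rewrite /GramN summxE.
under eq_bigr => j1 _ do rewrite summxE.
under eq_bigr => j1 _ do under eq_bigr => l1 _ do rewrite summxE.
under eq_bigr => j1 _ do under eq_bigr => l1 _ do under eq_bigr => l2 _ do
  rewrite !mxE !mxvec_index_eq.
rewrite (bigD1 j) //= [X in _ + X]big1 ?addr0 => [|j1 ne_j1]; last first.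
  by apply: big1 => l1 _; apply: big1 => l2 _; rewrite (eq_sym j) (negbTE ne_j1) mulr0.
rewrite (bigD1 l) //= [X in _ + X]big1 ?addr0 => [|l1 ne_l1]; last first.
  by apply: big1 => l2 _; rewrite (eq_sym l) (negbTE ne_l1) andbF mulr0.
rewrite (bigD1 l') //= [X in _ + X]big1 ?addr0 => [|l2 ne_l2]; last first.
  by rewrite (eq_sym l') (negbTE ne_l2) !andbF mulr0.
by rewrite !eqxx !andbT andTb (eq_sym j') mulrC.
Qed.

Lemma bN_vcoord (u v : V) :
  bN u v = \sum_j \sum_l \sum_l' vcoord u j l * cartan l l' * vcoord v j l'.
Proof.
rewrite /bN !mxE sum_mxvec.
rewrite (eq_bigr (fun j => \sum_l' (\sum_l vcoord u j l * cartan l l') * vcoord v j l')).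
  by apply: eq_bigr => j _; rewrite exchange_big; apply: eq_bigr => l _; rewrite mulr_suml.
move=> j _; apply: eq_bigr => l' _; rewrite !mxE sum_mxvec; congr (_ * _).
rewrite (bigD1 j) //= [X in _ + X]big1 ?addr0 => [|j1 ne_j1]; last first.
  by apply: big1 => l _; rewrite GramN_mxvec (negbTE ne_j1) mul0r mulr0.
by apply: eq_bigr => l _; rewrite GramN_mxvec eqxx mul1r.
Qed.

Lemma bN_Et (w : V) k l' : bN w (Et k l') = \sum_l vcoord w k l * cartan l l'.
Proof.
rewrite bN_vcoord (bigD1 k) //= [X in _ + X]big1 ?addr0 => [|j ne_jk]; last first.
  by apply: big1 => l _; apply: big1 => l1 _; rewrite vcoordEt (negbTE ne_jk) mulr0.
apply: eq_bigr => l _; rewrite (bigD1 l') //= [X in _ + X]big1 ?addr0 => [|l1 ne_l1].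
  by rewrite vcoordEt !eqxx mulr1.
by rewrite vcoordEt (negbTE ne_l1) andbF mulr0.
Qed.

Lemma bN_supported (x y : V) j : (forall k l, k != j -> vcoord x k l = 0) ->
  bN x y = \sum_l \sum_l' vcoord x j l * cartan l l' * vcoord y j l'.
Proof.
move=> supp_x; rewrite bN_vcoord (bigD1 j) //= [X in _ + X]big1 ?addr0 // => k ne_kj.
by apply: big1 => l _; apply: big1 => l' _; rewrite supp_x // !mul0r.
Qed.

Section IntSpan.
Variables (W : zmodType) (m : nat) (s : m.-tuple W).

Lemma inIntSpanD u v : inIntSpan s u -> inIntSpan s v -> inIntSpan s (u + v).
Proof.
move=> [a ->] [b ->]; exists (a + b); rewrite -big_split /=.
by apply: eq_bigr => i _; rewrite ffunE mulrzDr.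
Qed.

Lemma inIntSpanMz v z : inIntSpan s v -> inIntSpan s (v *~ z).
Proof.
move=> [a ->]; exists [ffun i => a i * z]; rewrite mulrz_suml.
by apply: eq_bigr => i _; rewrite ffunE mulrzA.
Qed.

Lemma inIntSpanB u v : inIntSpan s u -> inIntSpan s v -> inIntSpan s (u - v).
Proof. by move=> su sv; apply: inIntSpanD su _; rewrite -mulrN1z; apply: inIntSpanMz. Qed.

Lemma inIntSpan_sum I (r : seq I) (P : pred I) (F : I -> W) :
  (forall i, P i -> inIntSpan s (F i)) -> inIntSpan s (\sum_(i <- r | P i) F i).
Proof.
move=> sF; elim/big_rec: _ => [|i x Pi sx]; last by apply: inIntSpanD => //; apply: sF.
by exists 0; rewrite big1 // => i _; rewrite ffunE mulr0z.
Qed.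

Lemma inIntSpan_mem x : x \in s -> inIntSpan s x.
Proof.
case/(nthP 0) => i; rewrite size_tuple => lt_im <-.
exists [ffun k : 'I_m => ((k : nat) == i)%:Z].
rewrite (bigD1 (Ordinal lt_im)) //= ffunE eqxx mulr1z big1 ?addr0 // => k ne_ki.
by rewrite ffunE; case: eqP => [eq_ki|]; [case/eqP: ne_ki; apply: val_inj | rewrite mulr0z].
Qed.

End IntSpan.

(** * A coordinate description of N *)

(* For [k >= 6], [glue_coef k j] is the entry [a_(k-5),(j+1)] of the glue
   vector [w_(k-5)] (indices are 0-based in the code, 1-based in the paper). *)
Definition glue_coef (k j : 'I_12) : rat :=
  if (6 <= k)%N then (nth 0 (nth [::] glue_rows (k - 6)) j)%:~R else 0.

Lemma glue_coef_int k j : glue_coef k j \is a Num.int.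
Proof. by rewrite /glue_coef; case: ifP => _; rewrite ?intr_int ?rpred0. Qed.

(* The last six columns of the glue matrix form an identity matrix, so the
   class of [v] modulo [A_2^12] must be the combination of the [w_i] read off
   from the blocks [k >= 6]; the third condition says exactly this. *)
Definition glue_conditions (f : 'I_12 -> 'I_2 -> rat) : Prop := forall j,
  [/\ 3%:R * f j 0 \is a Num.int, f j 1 - 2%:R * f j 0 \is a Num.int
    & f j 0 - \sum_k glue_coef k j * f k 0 \is a Num.int].

Definition glue_conditionsb (f : 'I_12 -> 'I_2 -> rat) : bool :=
  all_ord (fun j => [&& 3%:R * f j 0 \is a Num.int, f j 1 - 2%:R * f j 0 \is a Num.int
    & f j 0 - sum_ord (fun k => glue_coef k j * f k 0) \is a Num.int]).

Lemma glue_conditionsP f : glue_conditionsb f -> glue_conditions f.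
Proof.
by rewrite /glue_conditionsb => /all_ordP f_ok j; case/and3P: (f_ok j); rewrite -sum_ordE.
Qed.

Lemma eq_glue_conditions f g :
  (forall j l, f j l = g j l) -> glue_conditions f -> glue_conditions g.
Proof.
move=> eq_fg cf j; rewrite -!eq_fg; under eq_bigr => k _ do rewrite -eq_fg.
exact: cf.
Qed.

Lemma glue_conditions_int (v : V) :
  (forall j l, vcoord v j l \is a Num.int) -> glue_conditions (vcoord v).
Proof.
move=> vZ j; split; first by rewrite rpredM ?vZ ?rpred_nat.
  by rewrite rpredB ?rpredM ?vZ ?rpred_nat.
by rewrite rpredB ?vZ ?rpred_sum // => k _; rewrite rpredM ?vZ ?glue_coef_int.
Qed.

Lemma glue_conditionsD (u v : V) : glue_conditions (vcoord u) ->
  glue_conditions (vcoord v) -> glue_conditions (vcoord (u + v)).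
Proof.
move=> cu cv j; have [u1 u2 u3] := cu j; have [v1 v2 v3] := cv j.
under eq_bigr => k _ do rewrite vcoordD mulrDr.
rewrite !vcoordD big_split /=.
split; first by rewrite mulrDr rpredD.
  by rewrite mulrDr opprD addrACA rpredD.
by rewrite opprD addrACA rpredD.
Qed.

Lemma glue_conditionsMz (v : V) z :
  glue_conditions (vcoord v) -> glue_conditions (vcoord (v *~ z)).
Proof.
move=> cv j; have [v1 v2 v3] := cv j; have zZ := intr_int rat z.
under eq_bigr => k _ do rewrite vcoordMz mulrA.
rewrite !vcoordMz -mulr_suml !mulrA -!mulrBl.
by split; rewrite rpredM.
Qed.

Definition wvec_coord (r : seq int) (j : 'I_12) (l : 'I_2) : rat :=
  3%:R^-1 * (nth 0 r j)%:~R * (if l == 0 then 1 else 2%:R).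

Lemma vcoord_wvec r j l : vcoord (wvec r) j l = wvec_coord r j l.
Proof.
rewrite /wvec vcoordZ vcoord_sum /wvec_coord -mulrA; congr (_ * _).
rewrite (bigD1 j) //= big1 ?addr0 => [|k ne_kj]; last first.
  by rewrite vcoordZ vcoordD vcoordZ !vcoordEt (eq_sym j) (negbTE ne_kj) /=; ring.
by rewrite vcoordZ vcoordD vcoordZ !vcoordEt eqxx; case: (ord2_cases l) => ->; rewrite /=; ring.
Qed.

Lemma glue_rows_conditions : all (fun r => glue_conditionsb (wvec_coord r)) glue_rows.
Proof. by vm_compute. Qed.

Lemma genN_conditions x : x \in genN -> glue_conditions (vcoord x).
Proof.
rewrite mem_cat => /orP[/mapP[[j l] _ ->] | /mapP[r r_glue ->]].
  by apply: glue_conditions_int => j' l'; rewrite vcoordEt rpred_nat.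
apply: (eq_glue_conditions (f := wvec_coord r)) => [j l|]; first by rewrite vcoord_wvec.
exact: glue_conditionsP (allP glue_rows_conditions r r_glue).
Qed.

Lemma inN_conditions v : inN v -> glue_conditions (vcoord v).
Proof.
move=> [a ->]; elim/big_rec: _ => [|i x _ cx].
  by apply: glue_conditions_int => j l; rewrite vcoord0 rpred0.
apply: glue_conditionsD => //; apply: glue_conditionsMz; apply: genN_conditions.
by rewrite -[genN]/(val (in_tuple genN)) mem_nth // size_tuple.
Qed.

Lemma inN_Et j l : inN (Et j l).
Proof.
apply: inIntSpan_mem; rewrite mem_cat; apply/orP; left.
by apply/mapP; exists (j, l); rewrite ?mem_enum.
Qed.

Lemma inN_int_vcoord (v : V) : (forall j l, vcoord v j l \is a Num.int) -> inN v.
Proof.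
move=> vZ; rewrite [v]vec_expand; apply: inIntSpan_sum => j _; apply: inIntSpan_sum => l _.
by rewrite -(floorK (vZ j l)) scaler_int; apply: inIntSpanMz; apply: inN_Et.
Qed.

(* Subtracting [3 v_k^(1)] copies of [w_(k-5)] for [k >= 6] leaves a vector
   with integral coordinates. *)
Lemma conditions_inN (v : V) : glue_conditions (vcoord v) -> inN v.
Proof.
move=> cv.
pose z (k : 'I_12) : int := if (6 <= k)%N then Num.floor (3%:R * vcoord v k 0) else 0.
pose W := \sum_(k < 12) wvec (nth [::] glue_rows (k - 6)) *~ z k.
have vcoordW j l : vcoord W j l =
    (if l == 0 then 1 else 2%:R) * \sum_k glue_coef k j * vcoord v k 0.
  rewrite vcoord_sum mulr_sumr; apply: eq_bigr => k _.
  rewrite vcoordMz vcoord_wvec /wvec_coord /z /glue_coef.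
  case: (leqP 6 k) => [le6k|_]; last by rewrite !mulr0 mul0r mulr0.
  have [v1 _ _] := cv k; rewrite (floorK v1).
  move: (_ %:~R) (if l == 0 then _ else _) (vcoord v k 0) => a b x; by field.
rewrite -(subrK W v); apply: inIntSpanD.
  apply: inN_int_vcoord => j l; have [_ v2 v3] := cv j.
  rewrite vcoordB vcoordW; case: (ord2_cases l) => -> /=; first by rewrite mul1r.
  rewrite (_ : _ - _ = (vcoord v j 1 - 2%:R * vcoord v j 0) +
    2%:R * (vcoord v j 0 - \sum_k glue_coef k j * vcoord v k 0)); last by ring.
  by rewrite rpredD // rpredM // rpred_nat.
apply: inIntSpan_sum => k _; apply: inIntSpanMz; apply: inIntSpan_mem.
by rewrite mem_cat map_f ?orbT // mem_nth //= ; have := ltn_ord k; lia.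
Qed.

Lemma inNE v : inN v <-> glue_conditions (vcoord v).
Proof. by split; [apply: inN_conditions | apply: conditions_inN]. Qed.

Lemma mulmx_inN (M : Mx) : (forall x, x \in genN -> inN (x *m M)) ->
  forall v, inN v -> inN (v *m M).
Proof.
move=> genM v [a ->]; rewrite mulmx_suml; apply: inIntSpan_sum => i _.
rewrite -scaler_int -scalemxAl scaler_int; apply: inIntSpanMz; apply: genM.
by rewrite -[genN]/(val (in_tuple genN)) mem_nth // size_tuple.
Qed.

(** * Signed monomial matrices *)

Definition flip (b : bool) (l : 'I_2) : 'I_2 := if b then rev_ord l else l.

Lemma flipK b : involutive (flip b).
Proof. by case: b => l //=; rewrite rev_ordK. Qed.

Lemma flip_inj b : injective (flip b).
Proof. exact: inv_inj (flipK b). Qed.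

Lemma cartan_flip b l l' : cartan (flip b l) (flip b l') = cartan l l'.
Proof. by rewrite /cartan (inj_eq (@flip_inj b)). Qed.

Definition monomial_mx (q : 'I_12 -> 'I_12) (sg : 'I_12 -> rat) (sw : 'I_12 -> bool) : Mx :=
  \sum_(j < 12) \sum_(l < 2)
    sg j *: delta_mx (mxvec_index (q j) (flip (sw j) l)) (mxvec_index j l).

Section Monomial.
Variables (q : 'I_12 -> 'I_12) (sg : 'I_12 -> rat) (sw : 'I_12 -> bool).

Lemma monomial_mx_mxvec j l j' l' :
  monomial_mx q sg sw (mxvec_index j l) (mxvec_index j' l') =
  sg j' * ((q j' == j) && (flip (sw j') l' == l))%:R.
Proof.
rewrite /monomial_mx summxE.
under eq_bigr => j1 _ do rewrite summxE.
under eq_bigr => j1 _ do under eq_bigr => l1 _ do rewrite !mxE !mxvec_index_eq.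
rewrite (bigD1 j') //= [X in _ + X]big1 ?addr0 => [|j1 ne_j1]; last first.
  by apply: big1 => l1 _; rewrite (eq_sym j') (negbTE ne_j1) /= andbF mulr0.
rewrite (bigD1 l') //= [X in _ + X]big1 ?addr0 => [|l1 ne_l1]; last first.
  by rewrite (eq_sym l') (negbTE ne_l1) /= !andbF mulr0.
by rewrite !eqxx !andbT (eq_sym j) (eq_sym l).
Qed.

Lemma vcoord_monomial (v : V) j l :
  vcoord (v *m monomial_mx q sg sw) j l = sg j * vcoord v (q j) (flip (sw j) l).
Proof.
rewrite /vcoord mxE sum_mxvec.
under eq_bigr => j1 _ do under eq_bigr => l1 _ do rewrite monomial_mx_mxvec mulrCA.
rewrite -(sum_vcoordEt (fun j1 l1 => sg j * v 0 (mxvec_index j1 l1))).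
by apply: eq_bigr => j1 _; apply: eq_bigr => l1 _; rewrite vcoordEt mulrA.
Qed.

Lemma monomial_mx_isometry : injective q -> (forall j, sg j * sg j = 1) ->
  forall u v, bN (u *m monomial_mx q sg sw) (v *m monomial_mx q sg sw) = bN u v.
Proof.
move=> q_inj sg2 u v; rewrite !bN_vcoord.
under eq_bigr => j _ do under eq_bigr => l _ do under eq_bigr => l' _ do
  rewrite !vcoord_monomial.
rewrite [RHS](reindex_inj q_inj); apply: eq_bigr => j _.
rewrite (reindex_inj (@flip_inj (sw j))); apply: eq_bigr => l _.
rewrite (reindex_inj (@flip_inj (sw j))); apply: eq_bigr => l' _.
rewrite !flipK cartan_flip -[RHS]mul1r -(sg2 j); ring.
Qed.

Lemma monomial_mx_inN : (forall j, sg j \is a Num.int) ->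
  all (fun r => glue_conditionsb (fun j l => sg j * wvec_coord r (q j) (flip (sw j) l)))
    glue_rows ->
  forall v, inN v -> inN (v *m monomial_mx q sg sw).
Proof.
move=> sgZ glue_ok; apply: mulmx_inN => x.
rewrite mem_cat => /orP[/mapP[[j0 l0] _ ->] | /mapP[r r_glue ->]].
  by apply: inN_int_vcoord => j l; rewrite vcoord_monomial vcoordEt rpredM ?rpred_nat.
apply/inNE/(eq_glue_conditions _ (glue_conditionsP (allP glue_ok r r_glue))) => j l.
by rewrite vcoord_monomial vcoord_wvec.
Qed.

End Monomial.

Lemma monomial_mx_mul_eq1 q sg sw q' sg' sw' :
  (forall j, q (q' j) = j) -> (forall j, sw (q' j) = sw' j) ->
  (forall j, sg' j * sg (q' j) = 1) ->
  monomial_mx q sg sw *m monomial_mx q' sg' sw' = 1%:M.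
Proof.
move=> qq' sw_q' sg_q'; apply/row_matrixP => i; rewrite !rowE mulmx1 mulmxA.
apply: vcoordP => j l.
by rewrite !vcoord_monomial qq' sw_q' flipK mulrA sg_q' mul1r.
Qed.

Lemma inA2E k v : inA2 k v <->
  (forall j l, j != k -> vcoord v j l = 0) /\ (forall l, vcoord v k l \is a Num.int).
Proof.
have vcoord_span (a : int ^ 2) j l :
    vcoord (\sum_(i < 2) [:: Et k 0; Et k 1]`_i *~ a i) j l = (j == k)%:R * (a l)%:~R.
  rewrite sum_ord2 vcoordD !vcoordMz !vcoordEt /=.
  by case: (ord2_cases l) => ->; case: (j == k); rewrite /=; ring.
split => [[a ->]|[out_k kZ]].
  by split => [j l /negbTE ne_jk|l]; rewrite vcoord_span ?ne_jk ?mul0r // eqxx mul1r intr_int.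
exists [ffun i => Num.floor (vcoord v k i)]; apply: vcoordP => j l.
rewrite vcoord_span ffunE; have [->|ne_jk] := eqVneq j k; first by rewrite mul1r floorK.
by rewrite mul0r out_k.
Qed.

Lemma monomial_mx_induces q sg sw (s : {perm 'I_12}) :
  (forall j, q (s j) = j) -> (forall j, sg j * sg j = 1) ->
  (forall j, sg j \is a Num.int) -> inducesPerm (monomial_mx q sg sw) s.
Proof.
move=> qs sg2 sgZ j v.
have q_eq j' : (q j' == j) = (j' == s j).
  by rewrite -{1}(permKV s j') qs -(inj_eq (@perm_inj _ s)) permKV.
split => [/inA2E[out_sj sjZ] | [u [/inA2E[out_j jZ] ->]]]; last first.
  apply/inA2E; split => [j' l /negbTE ne_j'|l]; rewrite vcoord_monomial.
    by rewrite out_j ?mulr0 // q_eq ne_j'.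
  by rewrite qs rpredM.
pose b := sw (s j).
exists (\sum_l (sg (s j) * vcoord v (s j) l) *: Et j (flip b l)).
set u := \sum_l _.
have vcoord_u j' l' : vcoord u j' l' = (j' == j)%:R * (sg (s j) * vcoord v (s j) (flip b l')).
  rewrite vcoord_sum; under eq_bigr => l _ do rewrite vcoordZ vcoordEt natr_andb.
  under eq_bigr => l _ do rewrite -[l' == _](inj_eq (@flip_inj b)) flipK mulrCA.
  by rewrite -mulr_sumr sum_delta.
split.
  apply/inA2E; split => [j' l' /negbTE ne_j'|l']; rewrite vcoord_u ?ne_j' ?mul0r //.
  by rewrite eqxx mul1r rpredM.
apply: vcoordP => j' l'; rewrite vcoord_monomial vcoord_u q_eq.
have [->|ne_j'] := eqVneq j' (s j); last by rewrite mul0r mulr0 out_sj.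
by rewrite /b flipK mul1r mulrA sg2 mul1r.
Qed.

(** * The symmetry group as a group of affine maps of F_3^2 *)

Local Notation Pt := ('I_3 * 'I_3)%type.

Definition all_pt (P : Pt -> bool) := all_ord (fun t1 => all_ord (fun t2 => P (t1, t2))).

Lemma all_ptP P : all_pt P -> forall t, P t.
Proof. by rewrite /all_pt => P_all [t1 t2]; exact: all_ordP (all_ordP P_all t1) t2. Qed.

Lemma all_ptW (P : Pt -> bool) : (forall t, P t) -> all_pt P.
Proof. by move=> P_all; apply/allP => k _; apply/allP => k' _; apply: P_all. Qed.

Definition all_curve (P : Curve -> bool) := all_pt (fun t => all_ord (fun l => P (t, l))).

Lemma all_curveP P : all_curve P -> forall x, P x.
Proof. by rewrite /all_curve => P_all [t l]; exact: all_ordP (all_ptP P_all t) l. Qed.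

(* The (0-based) index of the [A_2] receiving the two curves over the fixed
   point [t]. *)
Definition pt_index (t : Pt) : 'I_12 :=
  ord_mod 11 (nth 0%N (nth [::] iota_tab t.1) t.2).-1.

Definition index_pt (j : 'I_12) : Pt :=
  nth (ord_mod 2 0, ord_mod 2 0)
    [seq (ord_mod 2 p.1, ord_mod 2 p.2) | p <- [:: (2, 1); (1, 2); (1, 1); (0, 1);
       (1, 0); (0, 0); (0, 2); (2, 0); (2, 2)]%N] j.

Lemma pt_index_lt9 t : (pt_index t < 9)%N.
Proof. by move: t; apply: all_ptP; vm_compute. Qed.

Lemma pt_indexK : cancel pt_index index_pt.
Proof. by move=> t; apply/eqP; move: t; apply: all_ptP; vm_compute. Qed.

Lemma index_ptK (j : 'I_12) : (j < 9)%N -> pt_index (index_pt j) = j.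
Proof.
have ok : all_ord (fun j : 'I_12 => (j < 9)%N ==> (pt_index (index_pt j) == j)) by vm_compute.
by move=> lt9; apply/eqP; move: lt9; apply/implyP; apply: all_ordP ok j.
Qed.

Lemma pt_index_inj : injective pt_index.
Proof. exact: can_inj pt_indexK. Qed.

Lemma iotaE_Et (t : Pt) l :
  iotaE (t, l) = (if val t.1 == 1%N then -1 else 1) *: Et (pt_index t) l.
Proof.
have lt12 : ((nth 0 (nth [::] iota_tab t.1) t.2).-1 < 12)%N.
  by move: t; apply: all_ptP; vm_compute.
case: t lt12 => t1 t2 lt12; rewrite /iotaE /Et1; congr (_ *: Et _ l).
by apply: val_inj; rewrite /= inordK ?modn_small.
Qed.

Definition rot (t : Pt) : Pt := (- t.2, t.1).

Definition affine (k : 'I_4) (t0 : Pt) (x : Curve) : Curve :=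
  let t := iter k rot x.1 in ((t.1 + t0.1, t.2 + t0.2), flip (odd k) x.2).

Definition affine_pt k t0 (t : Pt) : Pt := (affine k t0 (t, 0)).1.

Definition is_affine (g : {perm Curve}) := exists k t0, forall x, g x = affine k t0 x.

Lemma affine_pt_inj k t0 : injective (affine_pt k t0).
Proof.
have inj : all_ord (fun k => all_pt (fun t0 => all_pt (fun t => all_pt (fun t' =>
   (affine_pt k t0 t == affine_pt k t0 t') ==> (t == t'))))) by vm_compute.
move=> t t' /eqP eq_tt'; apply/eqP; move: eq_tt'; apply/implyP.
exact: all_ptP (all_ptP (all_ptP (all_ordP inj k) t0) t) t'.
Qed.

Lemma affine_pt_id k t0 : (forall t, affine_pt k t0 t = t) -> k = 0 /\ t0 = (0, 0).
Proof.
have id : all_ord (fun k => all_pt (fun t0 => all_pt (fun t => affine_pt k t0 t == t) ==>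
   ((k == 0) && (t0 == (0, 0))))) by vm_compute.
move=> fix_t; have := implyP (all_ptP (all_ordP id k) t0).
by case/(_ _)/andP => [|/eqP-> /eqP->] //; apply: all_ptW => t; rewrite fix_t.
Qed.

Lemma affine_comp k1 t1 k2 t2 x :
  affine k2 t2 (affine k1 t1 x) = affine (k1 + k2) (affine_pt k2 t2 t1) x.
Proof.
have comp : all_ord (fun k1 => all_pt (fun t1 => all_ord (fun k2 => all_pt (fun t2 =>
  all_curve (fun x => affine k2 t2 (affine k1 t1 x) == affine (k1 + k2) (affine_pt k2 t2 t1) x)))))
  by vm_compute.
exact/eqP/(all_curveP (all_ptP (all_ordP (all_ptP (all_ordP comp k1) t1) k2) t2)).
Qed.

Lemma is_affineM g1 g2 : is_affine g1 -> is_affine g2 -> is_affine (g1 * g2)%g.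
Proof.
move=> [k1 [t1 g1E]] [k2 [t2 g2E]]; exists (k1 + k2), (affine_pt k2 t2 t1) => x.
by rewrite permM g1E g2E affine_comp.
Qed.

Lemma is_affine1 : is_affine 1%g.
Proof. by exists 0, (0, 0) => x; rewrite perm1; apply/eqP; move: x; apply: all_curveP. Qed.

Lemma is_affine_alpha1 : is_affine alpha1.
Proof. by exists 0, (1, 0) => x; rewrite permE; apply/eqP; move: x; apply: all_curveP. Qed.

Lemma is_affine_alpha2 : is_affine alpha2.
Proof. by exists 0, (0, 1) => x; rewrite permE; apply/eqP; move: x; apply: all_curveP. Qed.

Lemma is_affine_beta : is_affine beta.
Proof. by exists 1, (0, 0) => x; rewrite permE; apply/eqP; move: x; apply: all_curveP. Qed.

Lemma SymX_gens : [set alpha1; alpha2; beta] \subset SymX.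
Proof. exact: subset_gen. Qed.

Lemma alpha1_SymX : alpha1 \in SymX.
Proof. by apply: (subsetP SymX_gens); rewrite !inE eqxx. Qed.
Lemma alpha2_SymX : alpha2 \in SymX.
Proof. by apply: (subsetP SymX_gens); rewrite !inE eqxx ?orbT. Qed.
Lemma beta_SymX : beta \in SymX.
Proof. by apply: (subsetP SymX_gens); rewrite !inE eqxx ?orbT. Qed.

Lemma SymX_ind (P : {perm Curve} -> Prop) :
  P 1%g -> P alpha1 -> P alpha2 -> P beta ->
  (forall g1 g2, g1 \in SymX -> g2 \in SymX -> P g1 -> P g2 -> P (g1 * g2)%g) ->
  forall g, g \in SymX -> P g.
Proof.
move=> P1 Pa1 Pa2 Pb PM g /gen_prodgP[n [f f_gens ->]].
elim: n f f_gens => [|n IHn] f f_gens; first by rewrite big_ord0.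
have f_SymX i : f i \in SymX by apply: (subsetP SymX_gens).
rewrite big_ord_recr /=; apply: PM; last 2 first.
- by apply: IHn => i; apply: f_gens.
- by move: (f_gens ord_max); rewrite !inE => /orP[/orP[] | ] /eqP->.
- by apply: group_prod => i _.
- exact: f_SymX.
Qed.

Lemma SymX_affine g : g \in SymX -> is_affine g.
Proof.
apply: SymX_ind => [|||| g1 g2 _ _]; last exact: is_affineM.
- exact: is_affine1.
- exact: is_affine_alpha1.
- exact: is_affine_alpha2.
- exact: is_affine_beta.
Qed.

(** * The permutation [Theta] of the twelve [A_2]'s *)

Definition theta_fun (f : Curve -> Curve) (j : 'I_12) : 'I_12 :=
  if (j < 9)%N then pt_index (f (index_pt j, 0)).1 else j.

Lemma eq_theta_fun f g : f =1 g -> theta_fun f =1 theta_fun g.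
Proof. by move=> eq_fg j; rewrite /theta_fun eq_fg. Qed.

Lemma theta_fun_inj g : is_affine g -> injective (theta_fun g).
Proof.
move=> [k [t0 gE]] j1 j2; rewrite /theta_fun !gE.
case: ifP => lt1; case: ifP => lt2 // eq_j.
- by rewrite -(index_ptK lt1) -(index_ptK lt2) (affine_pt_inj (pt_index_inj eq_j)).
- by move: lt2; rewrite -eq_j pt_index_lt9.
- by move: lt1; rewrite eq_j pt_index_lt9.
Qed.

(* Junk value: [theta g] is the identity when [theta_fun g] is not injective,
   which never happens for [g] in [SymX]. *)
Lemma theta_subproof (g : {perm Curve}) :
  injective (fun j => if injectiveb (theta_fun g) then theta_fun g j else j).
Proof. by case: (boolP (injectiveb _)) => [/injectiveP | _ x y]. Qed.

Definition theta (g : {perm Curve}) : {perm 'I_12} := perm (@theta_subproof g).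

Lemma thetaE g : is_affine g -> theta g =1 theta_fun g.
Proof. by move=> /theta_fun_inj/injectiveP g_inj j; rewrite permE g_inj. Qed.

Lemma is_affine_fiber g x : is_affine g -> (g x).1 = (g (x.1, 0)).1.
Proof. by move=> [k [t0 gE]]; rewrite !gE. Qed.

Lemma thetaM g1 g2 :
  is_affine g1 -> is_affine g2 -> theta (g1 * g2)%g = (theta g1 * theta g2)%g.
Proof.
move=> g1_aff g2_aff; apply/permP => j.
have g12_aff := is_affineM g1_aff g2_aff.
rewrite permM !thetaE // /theta_fun.
case: ifP => [lt9|->] //; rewrite pt_index_lt9 pt_indexK permM.
by rewrite (is_affine_fiber _ g2_aff).
Qed.

Lemma theta1 : theta 1%g = 1%g.
Proof.
apply/permP => j; rewrite thetaE; last exact: is_affine1.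
rewrite perm1 /theta_fun.
by case: ifP => // lt9; rewrite perm1 index_ptK.
Qed.

Lemma theta_eq1 g : is_affine g -> theta g = 1%g -> g = 1%g.
Proof.
move=> g_aff theta_g1; have [k [t0 gE]] := g_aff.
have [k0 t00] : k = 0 /\ t0 = (0, 0).
  apply: affine_pt_id => t; apply: pt_index_inj.
  have := thetaE g_aff (pt_index t).
  by rewrite theta_g1 perm1 /theta_fun pt_index_lt9 pt_indexK gE => ->.
by apply/permP => x; rewrite perm1 gE k0 t00; apply/eqP; move: x; apply: all_curveP.
Qed.

(** * Lifting the symmetries to Aut(N) *)

Definition lifts (g : {perm Curve}) :=
  exists M, [/\ AutN M, M \in unitmx, extends M g & inducesPerm M (theta g)].

Lemma AutNM M1 M2 : AutN M1 -> AutN M2 -> AutN (M1 *m M2).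
Proof.
move=> [iso1 [fwd1 onto1]] [iso2 [fwd2 onto2]]; split; [|split].
- by move=> u v; rewrite !mulmxA iso2 iso1.
- by move=> v /fwd1/fwd2; rewrite mulmxA.
- move=> v /onto2[u2 [/onto1[u1 [Nu1 <-]] <-]].
  by exists u1; rewrite mulmxA.
Qed.

Lemma inducesPermM M1 M2 s1 s2 : inducesPerm M1 s1 -> inducesPerm M2 s2 ->
  inducesPerm (M1 *m M2) (s1 * s2)%g.
Proof.
move=> ind1 ind2 j v; rewrite permM; split.
  by move=> /(ind2 (s1 j))[u2 [/(ind1 j)[u1 [A2u1 ->]] ->]]; exists u1; rewrite mulmxA.
move=> [u [A2u ->]]; apply/(ind2 (s1 j)); exists (u *m M1); rewrite mulmxA.
by split=> //; apply/(ind1 j); exists u.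
Qed.

Lemma lifts1 : lifts 1%g.
Proof.
exists 1%:M; split.
- by split; [|split] => [u v|v|v Nv]; rewrite ?mulmx1 //; exists v; rewrite mulmx1.
- exact: unitmx1.
- by move=> x; rewrite mulmx1 perm1.
- rewrite theta1 => j v; rewrite perm1.
  by split=> [A2v|[u [A2u ->]]]; [exists v | ]; rewrite mulmx1.
Qed.

Lemma liftsM g1 g2 : is_affine g1 -> is_affine g2 -> lifts g1 -> lifts g2 -> lifts (g1 * g2)%g.
Proof.
move=> aff1 aff2 [M1 [Aut1 unit1 ext1 ind1]] [M2 [Aut2 unit2 ext2 ind2]].
exists (M1 *m M2); split.
- exact: AutNM.
- by rewrite unitmx_mul unit1.
- by move=> x; rewrite mulmxA ext1 ext2 permM.
- by rewrite thetaM //; apply: inducesPermM.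
Qed.

Definition iota_coord (x : Curve) (j : 'I_12) (l : 'I_2) : rat :=
  (if val x.1.1 == 1%N then -1 else 1) * ((pt_index x.1 == j) && (x.2 == l))%:R.

Lemma vcoord_iotaE x j l : vcoord (iotaE x) j l = iota_coord x j l.
Proof.
case: x => t l0; rewrite iotaE_Et vcoordZ vcoordEt.
by rewrite [j == _]eq_sym [l == _]eq_sym.
Qed.

Definition seq_ord (s : seq nat) (j : 'I_12) : 'I_12 := ord_mod 11 (nth 0%N s j).
Definition seq_sign (s : seq int) (j : 'I_12) : rat := (nth 0 s j)%:~R.
Definition seq_swap (s : seq bool) (j : 'I_12) : bool := nth false s j.

(* [(q', sg', sw')] is the table of the inverse matrix; every hypothesis is a
   finite check. *)
Lemma lifts_monomial (g : {perm Curve}) (f : Curve -> Curve) q sg sw q' sg' sw' :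
  g =1 f -> is_affine g ->
  all_ord (fun j => [&& seq_ord q (seq_ord q' j) == j, seq_swap sw (seq_ord q' j) == seq_swap sw' j
    & seq_sign sg' j * seq_sign sg (seq_ord q' j) == 1]) ->
  all_ord (fun j => [&& seq_sign sg j * seq_sign sg j == 1, seq_sign sg j \is a Num.int
    & seq_sign sg' j \is a Num.int]) ->
  all (fun r => glue_conditionsb (fun j l =>
    seq_sign sg j * wvec_coord r (seq_ord q j) (flip (seq_swap sw j) l))) glue_rows ->
  all (fun r => glue_conditionsb (fun j l =>
    seq_sign sg' j * wvec_coord r (seq_ord q' j) (flip (seq_swap sw' j) l))) glue_rows ->
  all_curve (fun x => all_ord (fun j => all_ord (fun l =>
    seq_sign sg j * iota_coord x (seq_ord q j) (flip (seq_swap sw j) l) ==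
    iota_coord (f x) j l))) ->
  all_ord (fun j => seq_ord q (theta_fun f j) == j) ->
  lifts g.
Proof.
move=> gE g_aff inv_ok sign_ok glue_ok glue_ok' iota_ok theta_ok.
pose M := monomial_mx (seq_ord q) (seq_sign sg) (seq_swap sw).
have inv_j j := and3P (all_ordP inv_ok j); have sign_j j := and3P (all_ordP sign_ok j).
have sg2 j : seq_sign sg j * seq_sign sg j = 1 by case: (sign_j j) => /eqP.
have sgZ j : seq_sign sg j \is a Num.int by case: (sign_j j).
have sgZ' j : seq_sign sg' j \is a Num.int by case: (sign_j j).
have MM' : M *m monomial_mx (seq_ord q') (seq_sign sg') (seq_swap sw') = 1%:M.
  by apply: monomial_mx_mul_eq1 => j; case: (inv_j j) => /eqP ? /eqP ? /eqP ?.
have q_theta j : seq_ord q (theta g j) = j.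
  by rewrite thetaE // (eq_theta_fun gE); apply/eqP/(all_ordP theta_ok j).
have q_inj : injective (seq_ord q).
  apply: (@can_inj _ _ _ (theta g)) => j.
  by rewrite -{1}(permKV (theta g) j) q_theta permKV.
exists M; split.
- split; first exact: monomial_mx_isometry.
  split; first exact: monomial_mx_inN.
  move=> v Nv; exists (v *m monomial_mx (seq_ord q') (seq_sign sg') (seq_swap sw')).
  by rewrite -mulmxA (mulmx1C MM') mulmx1; split=> //; apply: monomial_mx_inN.
- by case: (mulmx1_unit MM').
- move=> x; apply: vcoordP => j l; rewrite vcoord_monomial !vcoord_iotaE gE.
  exact/eqP/(all_ordP (all_ordP (all_curveP iota_ok x) j) l).
- exact: monomial_mx_induces.
Qed.

Lemma lifts_alpha1 : lifts alpha1.
Proof.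
apply: (@lifts_monomial _ a1f
  [:: 2; 6; 3; 0; 5; 7; 8; 4; 1; 9; 10; 11]%N [:: -1; -1; -1; 1; -1; 1; 1; -1; -1; 1; 1; 1]
  (nseq 12 false)
  [:: 3; 8; 0; 2; 7; 4; 1; 5; 6; 9; 10; 11]%N [:: 1; -1; -1; -1; -1; -1; -1; 1; 1; 1; 1; 1]
  (nseq 12 false)); try by vm_compute.
- by move=> x; rewrite permE.
- exact: is_affine_alpha1.
Qed.

Lemma lifts_alpha2 : lifts alpha2.
Proof.
apply: (@lifts_monomial _ a2f
  [:: 7; 2; 4; 5; 1; 6; 3; 8; 0; 9; 10; 11]%N (nseq 12 1) (nseq 12 false)
  [:: 8; 4; 1; 6; 2; 3; 5; 0; 7; 9; 10; 11]%N (nseq 12 1) (nseq 12 false)); try by vm_compute.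
- by move=> x; rewrite permE.
- exact: is_affine_alpha2.
Qed.

Lemma lifts_beta : lifts beta.
Proof.
apply: (@lifts_monomial _ bf
  [:: 2; 8; 1; 4; 6; 5; 7; 3; 0; 9; 10; 11]%N [:: -1; -1; 1; -1; -1; 1; 1; 1; 1; 1; 1; -1]
  (nseq 9 true ++ nseq 3 false)
  [:: 8; 2; 0; 7; 3; 5; 4; 6; 1; 9; 10; 11]%N [:: 1; 1; -1; 1; -1; 1; -1; 1; -1; 1; 1; -1]
  (nseq 9 true ++ nseq 3 false)); try by vm_compute.
- by move=> x; rewrite permE.
- exact: is_affine_beta.
Qed.

Lemma SymX_lifts g : g \in SymX -> lifts g.
Proof.
apply: SymX_ind.
- exact: lifts1.
- exact: lifts_alpha1.
- exact: lifts_alpha2.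
- exact: lifts_beta.
- by move=> g1 g2 /SymX_affine aff1 /SymX_affine aff2; apply: liftsM.
Qed.

Definition a2_norm (R : numDomainType) (x y : R) := x * x - x * y + y * y.

(* [4 a2_norm x y = (2 x - y)^2 + 3 y^2] *)
Lemma a2_norm_ge0 (R : realDomainType) (x y : R) : 0 <= a2_norm x y.
Proof. by have := sqr_ge0 (2%:R * x - y); have := sqr_ge0 y; rewrite /a2_norm; nra. Qed.

Lemma a2_norm_eq0 (R : realDomainType) (x y : R) : a2_norm x y = 0 -> x = 0 /\ y = 0.
Proof.
move=> norm0; have sq1 := sqr_ge0 (2%:R * x - y); have sq2 := sqr_ge0 y.
have y0 : y = 0 by apply/eqP; rewrite -sqrf_eq0; apply/eqP; move: norm0; rewrite /a2_norm; nra.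
by move: norm0; rewrite /a2_norm y0; nra.
Qed.

(* The Gram matrix of the images of the two simple roots has determinant
   [3 (a d - b c)^2], which must equal that of the Cartan matrix. *)
Lemma cartan_det (R : numFieldType) (a b c d : R) :
  2%:R * a * a - a * b - b * a + 2%:R * b * b = 2%:R ->
  2%:R * c * c - c * d - d * c + 2%:R * d * d = 2%:R ->
  2%:R * a * c - a * d - b * c + 2%:R * b * d = -1 ->
  (a * d - b * c) * (a * d - b * c) = 1.
Proof.
move=> n0 n1 n01; apply: (@mulfI _ 3%:R); first by rewrite pnatr_eq0.
have -> : 3%:R * ((a * d - b * c) * (a * d - b * c)) =
  (2%:R * a * a - a * b - b * a + 2%:R * b * b) * (2%:R * c * c - c * d - d * c + 2%:R * d * d)
  - (2%:R * a * c - a * d - b * c + 2%:R * b * d) ^+ 2 by ring.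
by rewrite n0 n1 n01; ring.
Qed.

Lemma norm2_supported (e : V) : (forall k l, vcoord e k l \is a Num.int) ->
  bN e e = 2%:R -> exists k0, forall k l, k != k0 -> vcoord e k l = 0.
Proof.
move=> eZ norm_e; pose Q k := a2_norm (vcoord e k 0) (vcoord e k 1).
have QZ k : Q k \is a Num.int by rewrite rpredD ?rpredB ?rpredM ?eZ.
have sumQ : \sum_k Q k = 1.
  apply: (@mulfI _ 2%:R); first by rewrite pnatr_eq0.
  rewrite mulr1 -[RHS]norm_e bN_vcoord mulr_sumr; apply: eq_bigr => k _.
  by rewrite cartan_form /Q /a2_norm; ring.
have [k0 Qk0] : exists k0, Q k0 != 0.
  apply/existsP; apply: contraT => /existsPn Q0.
  suff : \sum_k Q k = 0 by rewrite sumQ => /eqP; rewrite oner_eq0.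
  by apply: big1 => k _; apply/eqP; move: (Q0 k); rewrite negbK.
exists k0 => k l ne_k.
have Qk0_ge1 : 1 <= Q k0.
  have /intrP[n Qn] := QZ k0; move: Qk0 (a2_norm_ge0 (vcoord e k0 0) (vcoord e k0 1)).
  by rewrite -/(Q k0) Qn intr_eq0 ler0z ler1z; lia.
have : Q k + Q k0 <= 1.
  rewrite -sumQ (bigD1 k0) //= (bigD1 k) //= [leLHS]addrC lerD2l lerDl sumr_ge0 //.
  by move=> i _; apply: a2_norm_ge0.
have := a2_norm_ge0 (vcoord e k 0) (vcoord e k 1); rewrite -/(Q k) => Qk_ge0 Q_le1.
have [e0 e1] : vcoord e k 0 = 0 /\ vcoord e k 1 = 0 by apply: a2_norm_eq0; rewrite -/(Q k); lra.
by case: (ord2_cases l) => ->.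
Qed.

(** * Rigidity of the isometries of N fixing the image of iota *)

(* The last three [A_2]'s are the ones missing the image of iota. *)
Definition spare (v : V) := forall (k : 'I_12) l, (k < 9)%N -> vcoord v k l = 0.

Lemma Et_spare (j : 'I_12) l : (9 <= j)%N -> spare (Et j l).
Proof.
move=> le9j k l' lt9k; rewrite vcoordEt; case: eqP => // eq_kj.
by move: lt9k; rewrite eq_kj ltnNge le9j.
Qed.

Lemma sum_spare (M : nmodType) (F : 'I_12 -> M) : (forall k : 'I_12, (k < 9)%N -> F k = 0) ->
  \sum_k F k = F (ord_mod 11 9) + F (ord_mod 11 10) + F (ord_mod 11 11).
Proof.
move=> F0; rewrite (@big_split_ord _ _ _ 9 3) /= big1 ?add0r => [|i _]; last first.
  by rewrite F0 //= ltn_ord.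
rewrite !big_ord_recr big_ord0 /= add0r.
by congr (F _ + F _ + F _); apply: val_inj.
Qed.

Lemma spare_cases (k : 'I_12) : (9 <= k)%N ->
  k = ord_mod 11 9 \/ k = ord_mod 11 10 \/ k = ord_mod 11 11.
Proof.
have ok : all_ord (fun k : 'I_12 => (9 <= k)%N ==>
  [|| k == ord_mod 11 9, k == ord_mod 11 10 | k == ord_mod 11 11]) by vm_compute.
by move/(implyP (all_ordP ok k)) => /or3P[] /eqP->; auto.
Qed.

(* With [x_k] the first coordinate of block [k], the glue conditions at
   [j = 3, 4, 5] make [x_10 - x_11], [x_9 + x_11] and [x_10 - x_9] integral;
   together with [3 x_9] this gives [x_9], hence [x_10] and [x_11]. *)
Lemma spare_inN_int w : inN w -> spare w -> forall k l, vcoord w k l \is a Num.int.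
Proof.
move=> /inNE cw sw; pose x i := vcoord w (ord_mod 11 i) 0.
have glue_j (j : 'I_12) : (j < 9)%N -> glue_coef (ord_mod 11 9) j * x 9 +
    glue_coef (ord_mod 11 10) j * x 10 + glue_coef (ord_mod 11 11) j * x 11 \is a Num.int.
  move=> lt9; have [_ _] := cw j; rewrite sw // add0r rpredN sum_spare // => k lt9k.
  by rewrite sw // mulr0.
have := glue_j (ord_mod 11 3) isT; have := glue_j (ord_mod 11 4) isT.
have := glue_j (ord_mod 11 5) isT.
have [-> -> ->] : [/\ glue_coef (ord_mod 11 9) (ord_mod 11 5) = -1,
  glue_coef (ord_mod 11 10) (ord_mod 11 5) = 1 & glue_coef (ord_mod 11 11) (ord_mod 11 5) = 0].
  by split; apply/eqP; vm_compute.
have [-> -> ->] : [/\ glue_coef (ord_mod 11 9) (ord_mod 11 4) = 1,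
  glue_coef (ord_mod 11 10) (ord_mod 11 4) = 0 & glue_coef (ord_mod 11 11) (ord_mod 11 4) = 1].
  by split; apply/eqP; vm_compute.
have [-> -> ->] : [/\ glue_coef (ord_mod 11 9) (ord_mod 11 3) = 0,
  glue_coef (ord_mod 11 10) (ord_mod 11 3) = 1 & glue_coef (ord_mod 11 11) (ord_mod 11 3) = -1].
  by split; apply/eqP; vm_compute.
rewrite !mul0r !mul1r !mulN1r !addr0 add0r => x5 x4 x3.
have [x9_3 _ _] := cw (ord_mod 11 9); rewrite -/(x 9) in x9_3.
have x9 : x 9 \is a Num.int.
  have -> : x 9 = 3%:R * x 9 - (x 10 - x 11 + (x 9 + x 11) - (- x 9 + x 10)) by ring.
  by rewrite rpredB // rpredB // rpredD.
have x10 : x 10 \is a Num.int.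
  have -> : x 10 = - x 9 + x 10 + x 9 by ring.
  by rewrite rpredD.
have x11 : x 11 \is a Num.int.
  have -> : x 11 = x 9 + x 11 - x 9 by ring.
  by rewrite rpredB.
have w0 k : vcoord w k 0 \is a Num.int.
  have [lt9|/spare_cases[|[|]] -> //] := ltnP k 9.
  by rewrite sw ?rpred0.
move=> k l; case: (ord2_cases l) => ->; first exact: w0.
have [_ wk1 _] := cw k; rewrite (_ : vcoord w k 1 = vcoord w k 1 - 2%:R * vcoord w k 0 +
  2%:R * vcoord w k 0); last by ring.
by rewrite rpredD // rpredM ?rpred_nat.
Qed.

Lemma glue_row_spare (j k : 'I_12) : (9 <= j)%N -> (9 <= k)%N ->
  nth 0 (nth [::] glue_rows (j - 6)) k = (k == j)%:Z.
Proof.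
have ok : all_ord (fun j : 'I_12 => all_ord (fun k : 'I_12 => (9 <= j)%N ==> (9 <= k)%N ==>
  (nth 0 (nth [::] glue_rows (j - 6)) k == (k == j)%:Z))) by vm_compute.
by move=> le9j le9k; apply/eqP; move: le9k; apply/implyP; move: le9j; apply/implyP;
  apply: all_ordP (all_ordP ok j) k.
Qed.

Section Rigidity.
Variable K : Mx.
Hypothesis K_iso : forall u v : V, bN (u *m K) (v *m K) = bN u v.
Hypothesis K_inN : forall v, inN v -> inN (v *m K).
Hypothesis K_iota : forall x, iotaE x *m K = iotaE x.

Lemma fixes_Et (j : 'I_12) l : (j < 9)%N -> Et j l *m K = Et j l.
Proof.
move=> lt9; have := K_iota (index_pt j, l); rewrite iotaE_Et index_ptK // -scalemxAl.
by case: ifP => _; rewrite ?scale1r // !scaleN1r => /oppr_inj.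
Qed.

Lemma fixes_iota_span u : (forall (k : 'I_12) l, (9 <= k)%N -> vcoord u k l = 0) -> u *m K = u.
Proof.
move=> u_spare; rewrite [u in LHS]vec_expand mulmx_suml [RHS]vec_expand.
apply: eq_bigr => j _; rewrite mulmx_suml; apply: eq_bigr => l _.
by rewrite -scalemxAl; have [/fixes_Et->|/u_spare->] := ltnP j 9; rewrite ?scale0r.
Qed.

(* The Cartan matrix is nondegenerate, so a vector orthogonal to the first nine
   [A_2]'s is spare. *)
Lemma spare_mulmx v : spare v -> spare (v *m K).
Proof.
move=> v_spare k l lt9.
have orth l' : vcoord (v *m K) k 0 * cartan 0 l' + vcoord (v *m K) k 1 * cartan 1 l' = 0.
  rewrite -(sum_ord2 (fun l0 => vcoord (v *m K) k l0 * cartan l0 l')) -bN_Et.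
  by rewrite -(fixes_Et l' lt9) K_iso bN_Et big1 // => l0 _; rewrite v_spare // mul0r.
by have := orth 0; have := orth 1; rewrite /cartan /=; case: (ord2_cases l) => ->; lra.
Qed.

Section SpareBlock.
Variable j : 'I_12.
Hypothesis le9j : (9 <= j)%N.

Lemma image_Et_int l k l' : vcoord (Et j l *m K) k l' \is a Num.int.
Proof. exact: spare_inN_int (K_inN (inN_Et j l)) (spare_mulmx (Et_spare l le9j)) k l'. Qed.

Lemma image_Et_bN l l' : bN (Et j l *m K) (Et j l' *m K) = cartan l l'.
Proof.
rewrite K_iso bN_Et (bigD1 l) //= big1 ?addr0 => [|l0 ne_l0]; last first.
  by rewrite vcoordEt (negbTE ne_l0) andbF mul0r.
by rewrite vcoordEt !eqxx mul1r.
Qed.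

(* [w_(j-5) - (E_j^(1) + 2 E_j^(2))/3] is supported on the first nine [A_2]'s,
   so [K] moves [w_(j-5)] by the spare vector [X K - X] of N, which is thus
   integral; here [X = (E_j^(1) + 2 E_j^(2))/3]. *)
Lemma image_glue_int :
  3%:R^-1 * (vcoord (Et j 0 *m K) j 0 + 2%:R * vcoord (Et j 1 *m K) j 0 - 1) \is a Num.int.
Proof.
set r := nth [::] glue_rows (j - 6); set X := 3%:R^-1 *: (Et j 0 + 2%:R *: Et j 1).
have r_glue : r \in glue_rows by apply: mem_nth; have := ltn_ord j; rewrite /=; lia.
have X_spare : spare X.
  by move=> k l lt9; rewrite vcoordZ vcoordD vcoordZ !(Et_spare _ le9j) // mulr0 addr0 mulr0.
have rX_fixed : (wvec r - X) *m K = wvec r - X.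
  apply: fixes_iota_span => k l le9k.
  rewrite vcoordB vcoord_wvec /wvec_coord glue_row_spare // vcoordZ vcoordD vcoordZ !vcoordEt.
  by case: (ord2_cases l) => ->; case: (k == j); rewrite /=; ring.
have w_N : inN (wvec r) by apply: inIntSpan_mem; rewrite mem_cat map_f ?orbT.
have dE k l : vcoord (wvec r *m K - wvec r) k l = vcoord (X *m K) k l - vcoord X k l.
  by rewrite -{1}(subrK X (wvec r)) mulmxDl rX_fixed !vcoordB vcoordD vcoordB; ring.
have d_spare : spare (wvec r *m K - wvec r).
  by move=> k l lt9; rewrite dE (spare_mulmx X_spare) // X_spare // subr0.
suff -> : 3%:R^-1 * (vcoord (Et j 0 *m K) j 0 + 2%:R * vcoord (Et j 1 *m K) j 0 - 1) =
    vcoord (wvec r *m K - wvec r) j 0.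
  exact: spare_inN_int (inIntSpanB (K_inN w_N) w_N) d_spare j 0.
rewrite dE -scalemxAl mulmxDl -scalemxAl !vcoordZ !vcoordD !vcoordZ !vcoordEt !eqxx /=.
ring.
Qed.
Lemma image_Et_supported l k l' : k != j -> vcoord (Et j l *m K) k l' = 0.
Proof.
have [k0 supp0] := norm2_supported (image_Et_int 0) (image_Et_bN 0 0).
have [k1 supp1] := norm2_supported (image_Et_int 1) (image_Et_bN 1 1).
have k10 : k1 = k0.
  apply: contraTeq isT => ne_k10.
  have : bN (Et j 0 *m K) (Et j 1 *m K) = 0.
    rewrite bN_vcoord big1 // => k2 _; apply: big1 => l1 _; apply: big1 => l2 _.
    have [->|/supp0->] := eqVneq k2 k0; last by rewrite !mul0r.
    by rewrite supp1 ?mulr0 // eq_sym.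
  by rewrite image_Et_bN /cartan /= => /eqP; rewrite oppr_eq0 oner_eq0.
subst k1; have k0j : k0 = j.
  apply: contraTeq image_glue_int => /negPf ne_k0; have ne_jk0 : j != k0 by rewrite eq_sym ne_k0.
  by rewrite supp0 // supp1 //; vm_compute.
by subst k0; case: (ord2_cases l) => -> ne_kj; [apply: supp0 | apply: supp1].
Qed.

Lemma image_Et_det :
  let e l l' := vcoord (Et j l *m K) j l' in
  (e 0 0 * e 1 1 - e 0 1 * e 1 0) * (e 0 0 * e 1 1 - e 0 1 * e 1 0) = 1.
Proof.
have gram l l' : bN (Et j l *m K) (Et j l' *m K) =
    \sum_l1 \sum_l2 vcoord (Et j l *m K) j l1 * cartan l1 l2 * vcoord (Et j l' *m K) j l2.
  exact/bN_supported/image_Et_supported.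
by apply: cartan_det; rewrite -cartan_form -gram image_Et_bN.
Qed.

Lemma image_A2_comb (p q : rat) k l :
  vcoord ((p *: Et j 0 + q *: Et j 1) *m K) k l =
  (k == j)%:R * (p * vcoord (Et j 0 *m K) j l + q * vcoord (Et j 1 *m K) j l).
Proof.
rewrite mulmxDl -!scalemxAl vcoordD !vcoordZ.
have [->|ne_kj] := eqVneq k j; first by rewrite mul1r.
by rewrite (image_Et_supported 0 l ne_kj) (image_Et_supported 1 l ne_kj) /=; ring.
Qed.

Lemma image_A2 u : inA2 j u -> inA2 j (u *m K).
Proof.
move=> /inA2E[out_j uZ]; rewrite [u](vcoord_supported out_j); apply/inA2E.
split => [k l /negbTE ne_kj|l]; rewrite image_A2_comb ?ne_kj ?mul0r // eqxx mul1r.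
by rewrite rpredD ?rpredM ?uZ ?image_Et_int.
Qed.

(* The restriction of [K] to the [A_2] spanned by [E_j^(1)], [E_j^(2)] is an
   integral matrix of determinant [±1], so its inverse is integral too. *)
Lemma image_A2_onto v : inA2 j v -> exists u, inA2 j u /\ v = u *m K.
Proof.
move=> /inA2E[out_j vZ]; have := image_Et_det; rewrite /=.
set a := vcoord (Et j 0 *m K) j 0; set b := vcoord (Et j 0 *m K) j 1.
set c := vcoord (Et j 1 *m K) j 0; set d := vcoord (Et j 1 *m K) j 1.
set de := a * d - b * c => det2; set x0 := vcoord v j 0; set x1 := vcoord v j 1.
have deZ : de \is a Num.int by rewrite rpredB ?rpredM ?image_Et_int.
exists ((de * (x0 * d - x1 * c)) *: Et j 0 + (de * (x1 * a - x0 * b)) *: Et j 1); split.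
  apply/inA2E; split => [k l ne_kj|l].
    by rewrite vcoordD !vcoordZ !vcoordEt (negbTE ne_kj) !mulr0 addr0.
  rewrite vcoordD !vcoordZ !vcoordEt !eqxx /=.
  by case: (ord2_cases l) => -> /=;
    rewrite ?mulr0 ?mulr1 ?addr0 ?add0r rpredM ?rpredB ?rpredM ?vZ ?image_Et_int.
rewrite [v in LHS](vcoord_supported out_j); apply: vcoordP => k l.
rewrite image_A2_comb vcoordD !vcoordZ !vcoordEt.
have [_|_] := eqVneq k j; rewrite /=; last by ring.
rewrite mul1r; case: (ord2_cases l) => -> /=;
  rewrite ?mulr0 ?mulr1 ?addr0 ?add0r -/x0 -/x1 -/a -/b -/c -/d.
  by transitivity (x0 * (de * de)); [rewrite det2 mulr1 | rewrite /de; ring].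
by transitivity (x1 * (de * de)); [rewrite det2 mulr1 | rewrite /de; ring].
Qed.

Lemma spare_A2_image v : inA2 j v <-> exists u, inA2 j u /\ v = u *m K.
Proof. by split=> [/image_A2_onto | [u [/image_A2 ? ->]]]. Qed.

End SpareBlock.

Lemma rigidity : inducesPerm K 1.
Proof.
move=> j v; rewrite perm1; have [lt9|le9] := ltnP j 9; last exact: spare_A2_image.
have fix_A2 u : inA2 j u -> u *m K = u.
  move/inA2E => [out_j _]; apply: fixes_iota_span => k l le9k; apply: out_j.
  by apply: contraTneq le9k => ->; rewrite -ltnNge.
by split => [A2v|[u [/fix_A2-> ->]]] //; exists v; rewrite fix_A2.
Qed.

End Rigidity.

(** * The homomorphism [Theta] *)

(* Two lifts of [g] differ by an isometry of N fixing the image of iota. *)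
Lemma lift_inducesPerm g M : g \in SymX -> AutN M -> extends M g -> inducesPerm M (theta g).
Proof.
move=> g_SymX [M_iso [M_N M_onto]] M_ext.
have [M0 [[M0_iso [_ M0_onto]] M0_unit M0_ext M0_ind]] := SymX_lifts g_SymX.
pose K := M *m invmx M0.
have -> : M = K *m M0 by rewrite /K (mulmxKV M0_unit).
rewrite -[theta g]mul1g; apply: inducesPermM M0_ind; apply: rigidity.
- by move=> u v; rewrite -M0_iso /K !mulmxA !(mulmxKV M0_unit) M_iso.
- move=> v /M_N/M0_onto[w [w_N w_M0]].
  by rewrite /K mulmxA -w_M0 (mulmxK M0_unit).
- by move=> x; rewrite /K mulmxA M_ext -M0_ext (mulmxK M0_unit).
Qed.

Lemma inducesPerm_uniq M s1 s2 : inducesPerm M s1 -> inducesPerm M s2 -> s1 = s2.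
Proof.
move=> ind1 ind2; apply/permP => j.
have A2_Et : inA2 (s1 j) (Et (s1 j) 0).
  by apply/inA2E; split => [k l /negbTE ne_k|l]; rewrite vcoordEt ?ne_k // rpred_nat.
have /(ind2 j)/inA2E[out_s2j _] := (ind1 j _).1 A2_Et.
apply: contraTeq isT => ne_j; have := out_s2j _ 0 ne_j.
by rewrite vcoordEt !eqxx => /eqP; rewrite oner_eq0.
Qed.

Lemma theta_morphM : {in SymX &, {morph theta : g h / (g * h)%g}}.
Proof. by move=> g h /SymX_affine g_aff /SymX_affine h_aff; apply: thetaM. Qed.

Definition Theta : {morphism SymX >-> {perm 'I_12}} := Morphism theta_morphM.

Lemma ThetaE g f : g \in SymX -> g =1 f -> Theta g =1 theta_fun f.
Proof. by move=> /SymX_affine g_aff gE j; rewrite /= thetaE // (eq_theta_fun gE). Qed.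

Lemma injm_Theta : ('injm Theta)%g.
Proof.
apply/injmP => g1 g2 g1_SymX g2_SymX eq_Theta.
have g12_SymX : (g1 * g2^-1)%g \in SymX by rewrite groupM ?groupV.
have := theta_eq1 (SymX_affine g12_SymX).
rewrite -[theta _]/(Theta _) morphM ?groupV // morphV // eq_Theta mulgV => /(_ erefl).
by move/(congr1 (fun h => h * g2)%g); rewrite mulgKV mul1g.
Qed.

Theorem mainTheorem17 :
  (* existence of a lift g~ in Aut(N) *)
  (forall g, g \in SymX -> exists M, AutN M /\ extends M g) /\
  (* every such lift permutes the twelve A_{2,j} *)
  (forall g M, g \in SymX -> AutN M -> extends M g ->
     exists s : {perm 'I_12}, inducesPerm M s) /\
  (* the induced permutation depends only on g *)
  (forall g M1 M2 (s1 s2 : {perm 'I_12}), g \in SymX ->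
     AutN M1 -> AutN M2 -> extends M1 g -> extends M2 g ->
     inducesPerm M1 s1 -> inducesPerm M2 s2 -> s1 = s2) /\
  (* Theta is an injective homomorphism into M_12 with the stated image *)
  exists Theta : {morphism SymX >-> {perm 'I_12}},
    (forall g M, g \in SymX -> AutN M -> extends M g -> inducesPerm M (Theta g)) /\
    ('injm Theta)%g /\
    (forall g, g \in SymX -> inM12 (Theta g)) /\
    (Theta @* SymX = <<[set Theta alpha1; Theta alpha2; Theta beta]>>)%g /\
    (forall j : 'I_12, (Theta alpha1 j).+1 =
        cyc [:: [:: 1; 4; 3]; [:: 2; 9; 7]; [:: 5; 8; 6]]%N j.+1) /\
    (forall j : 'I_12, (Theta alpha2 j).+1 =
        cyc [:: [:: 1; 9; 8]; [:: 2; 5; 3]; [:: 4; 7; 6]]%N j.+1) /\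
    (forall j : 'I_12, (Theta beta j).+1 =
        cyc [:: [:: 1; 9; 2; 3]; [:: 4; 8; 7; 5]]%N j.+1).
Proof.
have lift_ind := lift_inducesPerm.
split; first by move=> g /SymX_lifts[M [M_Aut _ M_ext _]]; exists M.
split; first by move=> g M g_SymX M_Aut M_ext; exists (theta g); apply: lift_ind.
split.
  move=> g M1 M2 s1 s2 g_SymX Aut1 Aut2 ext1 ext2 ind1 ind2.
  by rewrite -(inducesPerm_uniq (lift_ind _ _ g_SymX Aut1 ext1) ind1)
    (inducesPerm_uniq (lift_ind _ _ g_SymX Aut2 ext2) ind2).
exists Theta; split; first exact: lift_ind.
split; first exact: injm_Theta.
split; first by move=> g /SymX_lifts[M [M_Aut _ _ M_ind]]; exists M.
split.
  rewrite morphim_gen; last exact: SymX_gens.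
  by rewrite !morphimU !morphim_set1 ?alpha1_SymX ?alpha2_SymX ?beta_SymX.
have cycles g f (c : seq (seq nat)) : g \in SymX -> g =1 f ->
    all_ord (fun j : 'I_12 => (theta_fun f j).+1 == cyc c j.+1) ->
    forall j : 'I_12, (Theta g j).+1 = cyc c j.+1.
  by move=> g_SymX gE ok j; rewrite (ThetaE g_SymX gE); apply/eqP/(all_ordP ok).
split; first by apply: (cycles _ a1f) => [||]; [exact: alpha1_SymX | exact: permE | vm_compute].
split; first by apply: (cycles _ a2f) => [||]; [exact: alpha2_SymX | exact: permE | vm_compute].
by apply: (cycles _ bf) => [||]; [exact: beta_SymX | exact: permE | vm_compute].
Qed.
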